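(* Let $P$ be an $n\times l$ matrix over $\mathbb{F}_2$ and let $\theta\in\mathbb{R}$. Then \[ \langle \mathbf{0}|\exp(i\theta \mathbf{H}_P)|\mathbf{0}\rangle=\alpha_{(P,\theta)}, \] and for every nonzero $\mathbf{x}\in\mathbb{F}_2^l$, \[ \langle \mathbf{x}|\exp(i\theta \mathbf{H}_P)|\mathbf{0}\rangle=\alpha_{(P\top\mathbf{x},\theta)}-\alpha_{(P,\theta)}. \]
   Context: For an $n\times l$ binary matrix $P$ with rows $P_1,\dots,P_n\in\mathbb{F}_2^l$, the Hamiltonian on $l$ qubits is $\mathbf{H}_P=\sum_{a=1}^n\prod_{b=1}^l X_b^{P_{ab}}$, where $X_b$ is the Pauli $X$ operator on qubit $b$; $|\mathbf{x}\rangle$ denotes the computational basis state labelled by $\mathbf{x}\in\mathbb{F}_2^l$. The code $\mathcal{C}(P)\subseteq\mathbb{F}_2^n$ is the span of the columns of $P$; its rank $r$ is the rank of $P$ (so $|\mathcal{C}(P)|=2^r$), and $n$ is its length. The weight enumerator is $W_{\mathcal{C}}(\zeta)=\sum_{\mathbf{c}\in\mathcal{C}}\zeta^{|\mathbf{c}|}$, with $|\mathbf{c}|$ the Hamming weight. Define $\alpha_{(P,\theta)}=2^{-r}e^{i\theta n}W_{\mathcal{C}(P)}(e^{-2i\theta})$. For nonzero $\mathbf{x}\in\mathbb{F}_2^l$, the projection $P\top\mathbf{x}$ is the $n\times l$ matrix obtained from $P$ by replacing each row $\mathbf{a}$ by whichever of $\mathbf{a}$, $\mathbf{a}+\mathbf{x}$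 is lexicographically first. *)

From HB Require Import structures.
From mathcomp Require Import all_boot all_order all_algebra.
From mathcomp Require Import all_classical all_reals all_analysis.
From mathcomp Require Import complex.
Set Implicit Arguments. Unset Strict Implicit. Unset Printing Implicit Defensive.
Import Order.TTheory GRing.Theory Num.Theory.
Import numFieldNormedType.Exports.
Local Open Scope ring_scope.
Local Open Scope complex_scope.
Local Open Scope classical_set_scope.

Definition Cx (R : realType) : numFieldType := (R[i] : numFieldType).

Definition expi (R : realType) (t : R) : Cx R := (cos t +i* sin t).

(* Computational basis of l qubits is labelled by F_2^l = 'rV['F_2]_l.
   Operators on the 2^l-dimensional Hilbert space are given by their
   matrix entries A x y = <x|A|y>. *)
Definition op (R : realType) (l : nat) := 'rV['F_2]_l -> 'rV['F_2]_l -> Cx R.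

Definition opmul (R : realType) (l : nat) (A B : op R l) : op R l :=
  fun x y => \sum_(z : 'rV['F_2]_l) A x z * B z y.

Definition opid (R : realType) (l : nat) : op R l := fun x y => (x == y)%:R.

Definition oppow (R : realType) (l : nat) (A : op R l) (k : nat) : op R l :=
  iter k (opmul A) (@opid R l).

Definition ebasis (l : nat) (b : 'I_l) : 'rV['F_2]_l := \row_j ((j == b)%:R).

Definition pauliX (R : realType) (l : nat) (b : 'I_l) : op R l :=
  fun x y => (x == y + ebasis b)%:R.

Definition pauliString (R : realType) (l : nat) (v : 'rV['F_2]_l) : op R l :=
  foldr (fun b M => opmul (oppow (pauliX R b) (v 0 b != 0)) M)
        (@opid R l) (enum 'I_l).

Definition hamiltonian (R : realType) (n l : nat) (P : 'M['F_2]_(n, l)) : op R l :=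
  fun x y => \sum_(a < n) pauliString R (row a P) x y.

Definition iThetaH (R : realType) (n l : nat) (P : 'M['F_2]_(n, l)) (theta : R)
  : op R l := fun x y => ('i * theta%:C) * hamiltonian R P x y.

Definition opexp_entry_is (R : realType) (l : nat) (A : op R l)
  (x y : 'rV['F_2]_l) (z : Cx R) : Prop :=
  series (fun k => oppow A k x y / (k`!)%:R) @ \oo --> z.

(* The code C(P): span of the columns of P, a subspace of F_2^n
   (= row space of P^T). *)
Definition code (n l : nat) (P : 'M['F_2]_(n, l)) : {set 'rV['F_2]_n} :=
  [set c : 'rV['F_2]_n | (c <= P^T)%MS].

Definition hweight (n : nat) (c : 'rV['F_2]_n) : nat := #|[set i | c 0 i != 0]|.

Definition weight_enum (R : realType) (n l : nat) (P : 'M['F_2]_(n, l)) (zeta : Cx R)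
  : Cx R := \sum_(c in code P) zeta ^+ hweight c.

Definition alpha (R : realType) (n l : nat) (P : 'M['F_2]_(n, l)) (theta : R) : Cx R :=
  (2 ^+ \rank P)^-1 * expi (theta * n%:R) * weight_enum P (expi (- (2 * theta))).

Definition lexlt (l : nat) (a b : 'rV['F_2]_l) : bool :=
  [exists j : 'I_l, [forall i : 'I_l, (i < j)%N ==> (a 0 i == b 0 i)]
                      && (a 0 j == 0) && (b 0 j == 1)].

Definition projT (n l : nat) (P : 'M['F_2]_(n, l)) (x : 'rV['F_2]_l)
  : 'M['F_2]_(n, l) :=
  \matrix_(a < n, j < l)
     (if lexlt (row a P + x) (row a P) then (row a P + x) 0 j else row a P 0 j).

From Pilot Require Import Defs.
From HB Require Import structures.
From mathcomp Require Import all_boot all_order all_algebra.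
From mathcomp Require Import all_classical all_reals all_analysis.
From mathcomp Require Import complex ring.

Import Order.TTheory GRing.Theory Num.Theory.
Import numFieldNormedType.Exports.
Set Implicit Arguments.
Unset Strict Implicit.
Unset Printing Implicit Defensive.

Local Open Scope ring_scope.
Local Open Scope complex_scope.
Local Open Scope classical_set_scope.

(* The string X^v acts on the computational basis as the translation
   |y> |-> |y + v>, so H_P is a convolution operator on F_2^l and is
   diagonalised by the characters chi_y(x) = (-1)^(x.y); the eigenvalue on
   chi_y is eigenH P y = sum_a (-1)^(P_a.y).  Summing the exponential series
   mode by mode gives
     <x|exp(i theta H_P)|0> = 2^-l sum_y (-1)^(x.y) e^(i theta eigenH P y).
   As eigenH P y = n - 2 wt(y P^T) and every codeword of C(P) is hit by
   2^(l-r) vectors y, the x = 0 sum is alpha_(P,theta).  For x <> 0 with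
   leading coordinate j0, every row of P T x vanishes at j0, so
   eigenH (P T x) is invariant under y |-> y + e_j0 while (-1)^(x.y) changes
   sign; and eigenH (P T x) = eigenH P on the hyperplane x.y = 0.  Splitting
   the sum according to x.y yields alpha_(P T x,theta) - alpha_(P,theta). *)

Section ExpSeries.
Variable R : realType.
Local Notation C := (Cx R).

Lemma cvg_real_complex (T : Type) (F : set_system T) {FF : Filter F} (f : T -> R) (a : R) :
  f @ F --> a -> (fun t => (f t)%:C : C) @ F --> (a%:C : C).
Proof.
move=> /cvgrPdist_lt fa; apply/cvgrPdist_lt => e.
rewrite ltcE /= => /andP[/eqP eIm e_gt0].
near=> t; rewrite -rmorphB normc_def /= expr0n /= addr0 sqrtr_sqr.
by rewrite ltcE /= eIm eqxx; near: t; exact: fa.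
Unshelve. all: by end_near.
Qed.

Lemma expi_coeffE (t : R) (k : nat) :
  ('i * t%:C) ^+ k / k`!%:R = (cos_coeff t k)%:C + 'i * (sin_coeff t k)%:C :> C.
Proof.
rewrite /cos_coeff /sin_coeff /= -exprnP exprMn.
have [m [->|->]] : exists m, k = m.*2 \/ k = m.*2.+1.
  exists k./2; rewrite -{1 3}(odd_double_half k).
  by case: (odd k); [right|left].
all: have i_pow : ('i : C) ^+ m.*2 = (-1) ^+ m by rewrite -muln2 mulnC exprM sqr_i.
all: rewrite ?oddS ?odd_double /= ?uphalf_double ?doubleK ?mul0r ?mul1r ?rmorph0.
all: rewrite ?exprS i_pow !rmorphM !rmorphXn rmorphN1 fmorphV rmorph_nat.
all: ring.
Qed.

Lemma cvg_series_expi (t : R) :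
  series (fun k => ('i * t%:C) ^+ k / k`!%:R : C) @ \oo --> expi t.
Proof.
have -> : series (fun k => ('i * t%:C) ^+ k / k`!%:R : C) =
    (fun N => (series (cos_coeff t) N)%:C + 'i * (series (sin_coeff t) N)%:C).
  apply/funext => N; rewrite /series /=.
  under eq_bigr do rewrite expi_coeffE.
  by rewrite big_split /= -mulr_sumr !rmorph_sum.
have -> : expi t = (cos t)%:C + 'i * (sin t)%:C by rewrite /expi; simpc.
apply: cvgD; last apply: cvgM; [|exact: cvg_cst|];
  apply: cvg_real_complex; rewrite unlock;
  [exact: is_cvg_series_cos_coeff | exact: is_cvg_series_sin_coeff].
Qed.

Lemma expiD (a b : R) : expi (a + b) = expi a * expi b.
Proof. by rewrite /expi cosD sinD; simpc; congr (_ +i* _); ring. Qed.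

Lemma expiMn (a : R) (k : nat) : expi a ^+ k = expi (a * k%:R).
Proof.
elim: k => [|k IHk]; first by rewrite expr0 mulr0 /expi cos0 sin0.
by rewrite exprS IHk -expiD mulrS mulrDr mulr1.
Qed.

End ExpSeries.

Lemma F2_cases (a : 'F_2) : a = 0 \/ a = 1.
Proof. by case: a => [[|[|]]] // ?; [left|right]; apply: val_inj. Qed.

Lemma F2_neq0 (a : 'F_2) : a != 0 -> a = 1.
Proof. by case: (F2_cases a) => ->. Qed.

Lemma F2_add11 : 1 + 1 = 0 :> 'F_2.
Proof. by rewrite -mulr2n pchar_Fp_0. Qed.

Lemma oppmx_F2 (m k : nat) (A : 'M['F_2]_(m, k)) : - A = A.
Proof. by apply/matrixP => i j; rewrite mxE (oppr_pchar2 (pchar_Fp (isT : prime 2))). Qed.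

Lemma sum_indicator_shift {V : finZmodType} {K : ringType} (x a : V) (f : V -> K) :
  \sum_z (x == z + a)%:R * f z = f (x - a).
Proof.
rewrite (bigD1 (x - a)) //= subrK eqxx mul1r big1 ?addr0 // => z zN.
by rewrite (_ : x == z + a = false) ?mul0r //; apply: contraNF zN => /eqP ->; rewrite addrK.
Qed.

Lemma row_lead_coord (F : nzRingType) (l : nat) (x : 'rV[F]_l) : x != 0 ->
  exists2 j : 'I_l, x 0 j != 0 & forall i : 'I_l, (i < j)%N -> x 0 i = 0.
Proof.
move=> x_neq0; have [j xj] : exists j, x 0 j != 0.
  apply/existsP; apply: contraR x_neq0 => /existsPn x0.
  by apply/eqP/rowP => j; rewrite mxE; apply/eqP/negbNE/x0.
have [j0 xj0 j0_min] := arg_minnP (P := fun i => x 0 i != 0) val xj.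
exists j0 => // i; apply: contraTeq => /j0_min; by rewrite -leqNgt.
Qed.

Lemma sumr_shift_opp_eq0 {V : finZmodType} {K : numDomainType} (e : V) (f : V -> K) :
  (forall y, f (y + e) = - f y) -> \sum_y f y = 0.
Proof.
move=> f_odd; apply/eqP; suff: (\sum_y f y) *+ 2 == 0 by rewrite mulrn_eq0.
rewrite mulr2n {2}(reindex_inj (addIr e)) /=.
by under [X in _ + X]eq_bigr do rewrite f_odd; rewrite sumrN subrr.
Qed.

Definition signF2 {R : ringType} (b : 'F_2) : R := if b == 0 then 1 else -1.

Lemma signF2D (R : ringType) (a b : 'F_2) :
  signF2 (a + b) = signF2 a * signF2 b :> R.
Proof.
by case: (F2_cases a) => ->; case: (F2_cases b) => ->;
  rewrite /signF2 /= ?mulr1 ?mul1r ?mulrNN ?mulr1.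
Qed.

Section Fourier.
Variables (R : realType) (l : nat).
Local Notation C := (Cx R).
Local Notation V := ('rV['F_2]_l).

Definition dotF2 (x y : V) : 'F_2 := (x *m y^T) 0 0.

Lemma dotF2Dl (x x' y : V) : dotF2 (x + x') y = dotF2 x y + dotF2 x' y.
Proof. by rewrite /dotF2 mulmxDl mxE. Qed.

Lemma dotF2Dr (x y y' : V) : dotF2 x (y + y') = dotF2 x y + dotF2 x y'.
Proof. by rewrite /dotF2 linearD /= mulmxDr mxE. Qed.

Lemma dotF2_ebasis (x : V) (j : 'I_l) : dotF2 x (ebasis j) = x 0 j.
Proof.
rewrite /dotF2 mxE (bigD1 j) //= !mxE eqxx mulr1 big1 ?addr0 // => i /negbTE ij.
by rewrite !mxE ij mulr0.
Qed.

Definition chi (y x : V) : C := (signF2 (dotF2 x y) : R)%:C.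

Lemma chiD (y x x' : V) : chi y (x + x') = chi y x * chi y x'.
Proof. by rewrite /chi dotF2Dl signF2D rmorphM. Qed.

Lemma chi0 (y : V) : chi y 0 = 1.
Proof. by rewrite /chi /dotF2 mul0mx mxE /signF2 eqxx. Qed.

Lemma chi_ebasis (y x : V) (j : 'I_l) : x 0 j != 0 -> chi (y + ebasis j) x = - chi y x.
Proof.
move=> /F2_neq0 xj.
by rewrite /chi dotF2Dr dotF2_ebasis xj signF2D /signF2 /= mulrN1 rmorphN.
Qed.

Lemma card_rowF2 : #|{: V}| = (2 ^ l)%N.
Proof. by rewrite card_mx card_Fp // mul1n. Qed.

Lemma sum_chi (x : V) : \sum_y chi y x = (x == 0)%:R * 2 ^+ l.
Proof.
have [->|/row_lead_coord[j xj _]] := eqVneq x 0.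
  by under eq_bigr do rewrite chi0; rewrite sumr_const card_rowF2 mul1r natrX.
by rewrite mul0r (sumr_shift_opp_eq0 (e := ebasis j)) // => y; exact: chi_ebasis.
Qed.

Definition shift_op (w : V) : op R l := fun x y => (x == y + w)%:R.

Lemma opmul_shift (u w : V) : opmul (shift_op u) (shift_op w) = shift_op (w + u).
Proof.
apply/funext => x; apply/funext => y; rewrite /opmul /shift_op.
rewrite (bigD1 (y + w)) //= eqxx mulr1 big1 ?addr0 ?addrA // => z /negbTE zN.
by rewrite eq_sym zN mulr0.
Qed.

Lemma opid_shift : @opid R l = shift_op 0.
Proof. by apply/funext => x; apply/funext => y; rewrite /shift_op addr0. Qed.

Lemma pauliString_shift (v : V) : pauliString R v = shift_op v.
Proof.
have foldE s : foldr (fun b M => opmul (oppow (pauliX R b) (v 0 b != 0)) M)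
    (@opid R l) s = shift_op (\sum_(b <- s) (if v 0 b != 0 then ebasis b else 0)).
  elim: s => [|b s IHs] /=; first by rewrite big_nil opid_shift.
  rewrite big_cons {}IHs /oppow; case: (v 0 b != 0) => /=.
    by rewrite opid_shift opmul_shift add0r opmul_shift addrC.
  by rewrite opid_shift !opmul_shift !add0r addr0.
rewrite /pauliString foldE big_enum /=; congr shift_op; apply/rowP => j.
rewrite summxE (bigD1 j) //= big1 => [|i ij].
  by rewrite addr0; case: (F2_cases (v 0 j)) => ->; rewrite ?eqxx !mxE ?eqxx.
by case: ifP => _; rewrite !mxE // eq_sym (negbTE ij).
Qed.

End Fourier.

Arguments chi {R l}.
Arguments shift_op {R l}.

Section RowSpace.
Variables (F : finFieldType) (k m : nat) (A : 'M[F]_(k, m)).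

Lemma card_rowspace : #|[set c : 'rV[F]_m | (c <= A)%MS]%SET| = (#|F| ^ \rank A)%N.
Proof.
have -> : [set c : 'rV[F]_m | (c <= A)%MS]%SET = [set u *m row_base A | u : 'rV_(\rank A)]%SET.
  apply/setP => c; rewrite inE -(eq_row_base A).
  by apply/idP/imsetP => [/submxP[u ->]|[u _ ->]]; [exists u | exact: submxMl].
by rewrite card_imset ?card_mx ?mul1n //; exact/row_free_inj/row_base_free.
Qed.

Lemma card_mulmx_fiber (y : 'rV[F]_k) :
  #|[set z : 'rV[F]_k | z *m A == y *m A]%SET| = #|[set z : 'rV[F]_k | z *m A == 0]%SET|.
Proof.
rewrite -[in RHS](card_imset _ (addIr y)); apply: eq_card => z; rewrite inE.
apply/eqP/imsetP => [zA|[u]]; last by rewrite inE => /eqP uA ->; rewrite mulmxDl uA add0r.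
by exists (z - y); rewrite ?subrK // inE mulmxBl zA subrr.
Qed.

Lemma sum_mulmx (V : nmodType) (g : 'rV[F]_m -> V) :
  \sum_(y : 'rV[F]_k) g (y *m A) =
  (\sum_(c in [set c : 'rV[F]_m | (c <= A)%MS]%SET) g c) *+
    #|[set y : 'rV[F]_k | y *m A == 0]%SET|.
Proof.
rewrite (partition_big (fun y => y *m A) (mem [set c : 'rV[F]_m | (c <= A)%MS]%SET))
  /=; last by move=> y _; rewrite inE submxMl.
rewrite -sumrMnl; apply: eq_bigr => c; rewrite inE => /submxP[y ->].
rewrite (eq_bigr (fun=> g (y *m A))) => [|z /eqP-> //].
by rewrite sumr_const -(card_mulmx_fiber y); congr (_ *+ _); apply: eq_card => z; rewrite inE.
Qed.

End RowSpace.

Section Spectrum.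
Variables (R : realType) (n l : nat).
Local Notation C := (Cx R).
Local Notation V := ('rV['F_2]_l).

Definition eigenH (M : 'M['F_2]_(n, l)) (y : V) : R :=
  \sum_a signF2 (dotF2 (row a M) y).

Lemma eigenH_chi (M : 'M['F_2]_(n, l)) (y : V) :
  (eigenH M y)%:C = \sum_a chi y (row a M).
Proof. exact: rmorph_sum. Qed.

Variables (P : 'M['F_2]_(n, l)) (theta : R).

Lemma hamiltonianE (x y : V) : hamiltonian R P x y = \sum_a (x == y + row a P)%:R.
Proof. by apply: eq_bigr => a _; rewrite pauliString_shift. Qed.

Lemma iThetaH_mulE (A : op R l) (x y : V) :
  opmul (iThetaH P theta) A x y = 'i * theta%:C * \sum_a A (x + row a P) y.
Proof.
rewrite /opmul /iThetaH; set c := 'i * theta%:C.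
under eq_bigr do rewrite hamiltonianE -mulrA mulr_suml.
rewrite -mulr_sumr exchange_big /=; congr (_ * _); apply: eq_bigr => a _.
by rewrite sum_indicator_shift oppmx_F2.
Qed.

Lemma oppow_iThetaH (k : nat) (x : V) :
  oppow (iThetaH P theta) k x 0 =
  (2 ^+ l)^-1 * \sum_y chi y x * ('i * (theta * eigenH P y)%:C) ^+ k.
Proof.
elim: k x => [|k IHk] x.
  under eq_bigr do rewrite expr0 mulr1.
  by rewrite sum_chi mulrCA mulVf ?mulr1 ?addr0 // expf_neq0 ?pnatr_eq0.
rewrite /oppow iterS -/(oppow _ k) iThetaH_mulE.
under eq_bigr do rewrite IHk.
rewrite -mulr_sumr mulrCA; congr (_ * _).
under eq_bigr do under eq_bigr do rewrite chiD.
rewrite exchange_big mulr_sumr; apply: eq_bigr => y _.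
by rewrite -mulr_suml -mulr_sumr -eigenH_chi exprS rmorphM /=; ring.
Qed.

Lemma opexp_iThetaH (x : V) : opexp_entry_is (iThetaH P theta) x 0
  ((2 ^+ l)^-1 * \sum_y chi y x * expi (theta * eigenH P y)).
Proof.
rewrite /opexp_entry_is.
have -> : series (fun k => oppow (iThetaH P theta) k x 0 / k`!%:R) =
    (fun N => (2 ^+ l)^-1 * \sum_y chi y x *
       series (fun k => ('i * (theta * eigenH P y)%:C) ^+ k / k`!%:R : C) N).
  apply/funext => N; rewrite /series /=.
  under eq_bigr => k _ do rewrite oppow_iThetaH -mulrA mulr_suml.
  rewrite -mulr_sumr exchange_big /=; congr (_ * _).
  apply: eq_bigr => y _; rewrite [RHS]mulr_sumr.
  by apply: eq_bigr => k _; rewrite mulrA.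
apply: cvgM; first exact: cvg_cst.
apply: (cvg_big add_continuous) => y _.
apply: cvgM; first exact: cvg_cst.
exact: cvg_series_expi.
Qed.

End Spectrum.

Arguments eigenH {R n l}.

Section WeightEnumerator.
Variables (R : realType) (n l : nat).
Local Notation C := (Cx R).
Local Notation V := ('rV['F_2]_l).

Lemma card_code (M : 'M['F_2]_(n, l)) : #|Defs.code M| = (2 ^ \rank M)%N.
Proof. by rewrite card_rowspace card_Fp // mxrank_tr. Qed.

Lemma eigenH_hweight (M : 'M['F_2]_(n, l)) (y : V) :
  eigenH M y = n%:R - 2 * (hweight (y *m M^T))%:R :> R.
Proof.
have dotE a : dotF2 (row a M) y = (y *m M^T) 0 a.
  by rewrite /dotF2 !mxE; apply: eq_bigr => j _; rewrite !mxE mulrC.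
have signE (b : 'F_2) : signF2 b = 1 - 2 * (b != 0)%:R :> R.
  by case: (F2_cases b) => ->; rewrite /signF2 /=; ring.
have -> : n%:R = \sum_(a < n) 1 :> R by rewrite sumr_const card_ord.
rewrite /eigenH /hweight -sum1_card natr_sum mulr_sumr [X in _ - X]big_mkcond -sumrB.
apply: eq_bigr => a _.
rewrite signE dotE (_ : a \in _ = ((y *m M^T) 0 a != 0)).
  by case: (_ != 0); rewrite ?mulr0 ?mulr1.
by apply/idP/idP; rewrite in_setE.
Qed.

Lemma alphaE (M : 'M['F_2]_(n, l)) (theta : R) :
  alpha M theta = (2 ^+ l)^-1 * \sum_y expi (theta * eigenH M y).
Proof.
set K := #|[set y : V | y *m M^T == 0]%SET|.
have card_split : (2 ^+ l : C) = K%:R * 2 ^+ \rank M.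
  have := sum_mulmx (M^T) (fun=> 1 : C).
  by rewrite !sumr_const card_rowF2 card_code !natrX mulr_natl.
have inv_split : (2 ^+ l)^-1 * K%:R = (2 ^+ \rank M)^-1 :> C.
  rewrite card_split invfM mulrAC mulVf ?mul1r // pnatr_eq0 -lt0n.
  by apply/card_gt0P; exists 0; rewrite inE mul0mx.
under eq_bigr do rewrite eigenH_hweight.
rewrite (sum_mulmx (M^T) (fun c => expi (theta * (n%:R - 2 * (hweight c)%:R)))).
rewrite -[_ *+ K]mulr_natl mulrA inv_split /Defs.alpha /weight_enum -mulrA mulr_sumr.
by congr (_ * _); apply: eq_bigr => c _; rewrite expiMn -expiD; congr expi; ring.
Qed.

End WeightEnumerator.

Lemma lexlt_add_lead (l : nat) (a x : 'rV['F_2]_l) (j0 : 'I_l) :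
  x 0 j0 = 1 -> (forall i : 'I_l, (i < j0)%N -> x 0 i = 0) ->
  lexlt (a + x) a = (a 0 j0 == 1).
Proof.
move=> xj0 x_low; apply/existsP/eqP => [[j]|aj0]; last first.
  exists j0; rewrite [(a + x) 0 j0]mxE aj0 xj0 F2_add11 !eqxx !andbT.
  by apply/forallP => i; apply/implyP => /x_low xi; rewrite mxE xi addr0.
rewrite mxE => /andP[/andP[/forallP a_low /eqP ax0] /eqP aj].
have xj : x 0 j != 0 by apply: contra_eq_neq ax0 => ->; rewrite addr0 aj oner_eq0.
suff /val_inj <- : val j = val j0 by [].
apply/eqP; rewrite eqn_leq; apply/andP; split; rewrite leqNgt; apply/negP => lt_j.
  have := a_low j0; rewrite lt_j mxE xj0.
  by rewrite -subr_eq0 addrAC subrr add0r oner_eq0.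
by move: xj; rewrite x_low.
Qed.

Section Projection.
Variables (R : realType) (n l : nat) (P : 'M['F_2]_(n, l)) (x : 'rV['F_2]_l) (j0 : 'I_l).
Hypotheses (xj0 : x 0 j0 = 1) (x_low : forall i : 'I_l, (i < j0)%N -> x 0 i = 0).
Local Notation V := ('rV['F_2]_l).
Local Notation Q := (projT P x).

Lemma row_projT a :
  row a Q = if lexlt (row a P + x) (row a P) then row a P + x else row a P.
Proof. by apply/rowP => j; rewrite !mxE; case: ifP; rewrite !mxE. Qed.

Lemma projT_lead a : Q a j0 = 0.
Proof.
rewrite mxE (lexlt_add_lead _ xj0 x_low) !mxE.
by case: (F2_cases (P a j0)) => ->; rewrite ?eqxx ?xj0 ?F2_add11 // eq_sym oner_eq0.
Qed.

Lemma eigenH_projT (y : V) : dotF2 x y = 0 -> eigenH Q y = eigenH P y :> R.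
Proof.
move=> xy0; apply: eq_bigr => a _; rewrite row_projT.
by case: ifP => _ //; rewrite dotF2Dl xy0 addr0.
Qed.

Lemma eigenH_projT_shift (y : V) : eigenH Q (y + ebasis j0) = eigenH Q y :> R.
Proof.
apply: eq_bigr => a _.
by rewrite dotF2Dr dotF2_ebasis [row a Q 0 j0]mxE projT_lead addr0.
Qed.

Lemma sum_chi_expi_projT (theta : R) :
  (2 ^+ l)^-1 * \sum_y chi y x * expi (theta * eigenH P y) =
  alpha Q theta - alpha P theta.
Proof.
rewrite !alphaE -mulrBr -sumrB; congr (_ * _).
set EP := fun y => expi (theta * eigenH P y).
set EQ := fun y => expi (theta * eigenH Q y).
have sum_chi_EQ : \sum_y chi y x * EQ y = 0.
  apply: (sumr_shift_opp_eq0 (e := ebasis j0)) => y.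
  by rewrite /EQ eigenH_projT_shift chi_ebasis ?xj0 ?oner_eq0 // mulNr.
have : \sum_y (1 + chi y x) * (EQ y - EP y) = 0.
  apply: big1 => y _; case: (F2_cases (dotF2 x y)) => xy.
    by rewrite /EQ eigenH_projT // subrr mulr0.
  by rewrite /chi xy /signF2 /= rmorphN1 subrr mul0r.
under eq_bigr do rewrite mulrDl mul1r mulrBr.
rewrite big_split /= !sumrB sum_chi_EQ add0r => /eqP.
by rewrite subr_eq0 => /eqP ->.
Qed.

End Projection.

Theorem theorem1 (R : realType) (n l : nat) (P : 'M['F_2]_(n, l)) (theta : R) :
  opexp_entry_is (iThetaH P theta) 0 0 (alpha P theta) /\
  (forall x : 'rV['F_2]_l, x != 0 ->
     opexp_entry_is (iThetaH P theta) x 0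
       (alpha (projT P x) theta - alpha P theta)).
Proof.
split=> [|x /row_lead_coord[j0 /F2_neq0 xj0 x_low]].
  have := opexp_iThetaH (P := P) (theta := theta) (x := 0).
  by under eq_bigr do rewrite chi0 mul1r; rewrite -alphaE.
by rewrite -(sum_chi_expi_projT P xj0 x_low theta); exact: opexp_iThetaH.
Qed.
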